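(* Let $\mathcal{S}$ be a stratified staged tree for variables $X_1,\dots,X_n$ with $|\mathbb{X}_i|=r_i$, in which every stage consists of situations at a single level, and let $\alpha>0$. Then for every stage $u$ and every $k$, the CS-BDeu hyperparameter of the $k$-th edge of $u$ equals the BDepu hyperparameter of the $k$-th edge of $u$; explicitly, for a stage $u$ with $h$ situations at level $i-1$ (i.e. representing $X_i$), both equal $\alpha h/\prod_{t=1}^{i}r_t$, and both stage totals equal $\alpha h/\prod_{t=1}^{i-1}r_t$. Consequently $\mathrm{CS\text{-}BDeu}(\mathcal{S},\mathcal{D};\alpha)=\mathrm{BDepu}(\mathcal{S},\mathcal{D};\alpha)$ for every complete data sample $\mathcal{D}$.
   Context: An event tree is a finite directed rooted tree with edges directed away from the root; leaves have no outgoing edges, other nodes are situations; the level of a node is its distance (number of edges) from the root. A staged tree is an event tree with a partition of its situations into stages, situations in a common stage having the same number of outgoing edges, labelled consistently, with the $k$-th edges sharing a transition probability. For variables $X_1,\dots,X_n$ with finite state spaces $\mathbb{X}_i$, an event tree is $\mathcal{X}$-compatible if its nodes are the root $v_0$ together with one node $v(x_1,\dots,x_k)$ for each $(x_1,\dots,x_k)\in\mathbb{X}_1\times\dots\times\mathbb{X}_k$, $1\le k\le n$, with edges $v(x_1,\dots,x_{k-1})\to v(x_1,\dots,x_k)$ (and $v_0\to v(x_1)$); a staged tree is stratified if its event tree is $\mathcal{X}$-compatible for some such $\mathcal{X}$. Data: a complete sample $\mathcal{D}$ gives counts $n_{jk}$ of units passing through the $k$-th edge of some situation in stage $u_j$,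 $\overline n_j=\sum_k n_{jk}$. For hyperparameters $\alpha_{jk}$ with $\overline\alpha_j=\sum_k\alpha_{jk}$ the BD-metric is $\prod_j\big[\Gamma(\overline\alpha_j)/\Gamma(\overline\alpha_j+\overline n_j)\prod_k\Gamma(\alpha_{jk}+n_{jk})/\Gamma(\alpha_{jk})\big]$. BDepu: $\alpha_{jk}=\frac{\alpha}{|\Lambda(\mathcal{S})|}\sum_{m=1}^{h_j}|\Lambda(e^m_{jk})|$, where $\Lambda(\mathcal{S})$ is the set of root-to-leaf paths, $\Lambda(e)$ the set of those containing edge $e$, $h_j$ the number of situations in $u_j$, $e^m_{jk}$ the $k$-th edge of its $m$-th situation. CS-BDeu: hyperparameters are propagated forward from the root. The root stage has $\dot\alpha=\alpha$. For a stage $u_{ij}$ at level $i-1$ with $h_{ij}$ situations and $r_{ij}$ outgoing edges per situation, $\dot\alpha_{ij}$ is the sum of the (individual) hyperparameters of the $h_{ij}$ edges entering its situations, the stage edge hyperparameters are $\alpha_{ijk}=\dot\alpha_{ij}/r_{ij}$, and each individual edge emanating from a situation of $u_{ij}$ along label $k$ receives hyperparameter $\alpha_{ijk}/h_{ij}$. The CS-BDeu score is the BD-metric with these stage hyperparameters $\alpha_{ijk}$ (and $\overline\alpha_{ij}=\dot\alpha_{ij}$). *)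

From HB Require Import structures.
From mathcomp Require Import all_boot all_order all_algebra.
From mathcomp Require Import all_classical all_reals all_analysis.
Set Implicit Arguments. Unset Strict Implicit. Unset Printing Implicit Defensive.
Import Order.TTheory GRing.Theory Num.Theory.
Local Open Scope ring_scope.

Definition Gamma {R : realType} (x : R) : R :=
  fine (\int[@lebesgue_measure R]_(t in `]0%R, +oo[%classic)
          ((powR t (x - 1) * expR (- t))%:E))%E.

(* Stratified event tree for X_1..X_n, |X_t| = r t  (t = 1..n).            *)
(* A node v(x_1,..,x_k) is the sequence [:: x_1; ..; x_k] with x_t < r t;  *)
(* its level is k = size. Leaves are the nodes of length n (one per        *)
(* root-to-leaf path); situations are the nodes of length < n.            *)
(* The edge v(x_1..x_k) -> v(x_1..x_k,x) is identified with its head node. *)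

Fixpoint nodes_at (r : nat -> nat) (k : nat) : seq (seq nat) :=
  match k with
  | 0 => [:: [::]]
  | k'.+1 => [seq rcons s x | s <- nodes_at r k', x <- iota 0 (r k)]
  end.

Definition situations (n : nat) (r : nat -> nat) : seq (seq nat) :=
  flatten [seq nodes_at r k | k <- iota 0 n].

(* Lambda(S): root-to-leaf paths, represented by their leaves *)
Definition paths (n : nat) (r : nat -> nat) : seq (seq nat) := nodes_at r n.

Definition paths_through (n : nat) (r : nat -> nat) (w : seq nat) :
  seq (seq nat) := [seq l <- paths n r | prefix w l].

(* The staged tree is given by a stage labelling [stage] of situations
   (stages = its fibres) and an edge labelling [lab]: the k-th edge of
   situation v (k < r (size v).+1) is the edge v -> rcons v (lab v k). *)
Definition kth_edge (lab : seq nat -> nat -> nat) (v : seq nat) (k : nat) :=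
  rcons v (lab v k).

Definition stage_sits n r (stage : seq nat -> nat) (u : nat) :=
  [seq v <- situations n r | stage v == u].

Definition hcount n r stage u : nat := size (stage_sits n r stage u).

(* level of stage u (i-1 in the paper), read off from any of its situations *)
Definition stage_level n r stage u : nat := size (nth [::] (stage_sits n r stage u) 0).

Definition nedges n r stage u : nat := r (stage_level n r stage u).+1.

Definition stages n r (stage : seq nat -> nat) : seq nat :=
  undup [seq stage v | v <- situations n r].

Section Scores.
Variable R : realType.

Definition bdepu_hyp n r stage lab (alpha : R) (u k : nat) : R :=
  alpha / (size (paths n r))%:R *
  \sum_(v <- stage_sits n r stage u)
     (size (paths_through n r (kth_edge lab v k)))%:R.

Definition bdepu_total n r stage lab (alpha : R) (u : nat) : R :=
  \sum_(k < nedges n r stage u) bdepu_hyp n r stage lab alpha u k.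

(* cs_in k w : individual hyperparameter of the edge entering the node w
   at level k (for k = 0, the "incoming" value alpha of the root, so that
   the root stage gets dot-alpha = alpha).  For the edge from v (level k)
   with stage u: dot-alpha_u / r_{k+1} / h_u, where dot-alpha_u is the
   sum of the hyperparameters of the edges entering the situations of u
   (stages lie at a single level, so these are the level-k situations of u). *)
Fixpoint cs_in (r : nat -> nat) (stage : seq nat -> nat) (alpha : R)
  (k : nat) : seq nat -> R :=
  match k with
  | 0 => fun _ => alpha
  | k'.+1 => fun w =>
      let u := stage (take k' w) in
      let dot := \sum_(v <- nodes_at r k' | stage v == u) cs_in r stage alpha k' v in
      let h := count (fun v => stage v == u) (nodes_at r k') in
      dot / (r k)%:R / h%:R
  end.

Definition cs_total n r stage (alpha : R) (u : nat) : R :=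
  \sum_(v <- stage_sits n r stage u) cs_in r stage alpha (size v) v.

Definition cs_hyp n r stage (alpha : R) (u k : nat) : R :=
  cs_total n r stage alpha u / (nedges n r stage u)%:R.

(* A complete sample is a list of units, each a root-to-leaf path (leaf).
   n_{uk}: units passing through the k-th edge of some situation in u. *)
Definition ncount n r stage lab (D : seq (seq nat)) (u k : nat) : nat :=
  count (fun l => has (fun v => prefix (kth_edge lab v k) l)
                      (stage_sits n r stage u)) D.

Definition BDmetric n r stage lab (D : seq (seq nat))
  (a : nat -> nat -> R) (abar : nat -> R) : R :=
  \prod_(u <- stages n r stage)
    (Gamma (abar u) /
       Gamma (abar u + (\sum_(k < nedges n r stage u) ncount n r stage lab D u k)%:R) *
     \prod_(k < nedges n r stage u)
       (Gamma (a u k + (ncount n r stage lab D u k)%:R) / Gamma (a u k))).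

Definition BDepu n r stage lab (D : seq (seq nat)) (alpha : R) : R :=
  BDmetric n r stage lab D (bdepu_hyp n r stage lab alpha)
    (bdepu_total n r stage lab alpha).

Definition CSBDeu n r stage lab (D : seq (seq nat)) (alpha : R) : R :=
  BDmetric n r stage lab D (cs_hyp n r stage alpha) (cs_total n r stage alpha).

End Scores.

From HB Require Import structures.
From mathcomp Require Import all_boot all_order all_algebra.
From mathcomp Require Import all_classical all_reals all_analysis.
From mathcomp Require Import ring.
Import Order.TTheory GRing.Theory Num.Theory.

(* Both scores give every edge at level i (leaving a situation at level i-1)
   the same mass alpha / (r_1 ... r_i).  For CS-BDeu this holds by induction
   on the level: if every edge entering level i-1 carries
   alpha / (r_1 ... r_{i-1}), a stage of h situations there collects h times
   that mass and spreads it evenly over its h situations and r_i labels.  For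
   BDepu, an edge at level i lies on r_{i+1} ... r_n of the r_1 ... r_n
   root-to-leaf paths.  Summing over the h situations of a stage gives equal
   stage hyperparameters, hence equal BD-metrics. *)

Section Nodes.
Context {r : nat -> nat}.

Lemma size_mem_nodes_at {k s} : s \in nodes_at r k -> size s = k.
Proof.
elim: k s => [|k IH] s /=; first by rewrite inE => /eqP->.
by move=> /flatten_mapP [t ht] /mapP [x _ ->]; rewrite size_rcons (IH _ ht).
Qed.

Lemma nodes_at_uniq k : uniq (nodes_at r k).
Proof.
elim: k => //= k IH; apply: allpairs_uniq => //; first exact: iota_uniq.
by move=> [s1 x1] [s2 x2] _ _ /= /rcons_inj [-> ->].
Qed.

Lemma nodes_at_rcons {k s x} :
  s \in nodes_at r k -> (x < r k.+1)%N -> rcons s x \in nodes_at r k.+1.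
Proof. by move=> hs hx; apply/flatten_mapP; exists s; rewrite // map_f ?mem_iota. Qed.

Lemma nodes_at_take k w : w \in nodes_at r k.+1 -> take k w \in nodes_at r k.
Proof.
move=> /flatten_mapP [s hs] /mapP [x _ ->].
by rewrite -cats1 take_size_cat // (size_mem_nodes_at hs).
Qed.

Lemma size_nodes_at k : size (nodes_at r k) = (\prod_(1 <= t < k.+1) r t)%N.
Proof.
elim: k => [|k IH]; first by rewrite big_geq.
by rewrite /= size_allpairs IH size_iota [in RHS]big_nat_recr.
Qed.

Lemma count_prefix_nodes_at i k w : w \in nodes_at r i -> (i <= k)%N ->
  count (prefix w) (nodes_at r k) = (\prod_(i.+1 <= t < k.+1) r t)%N.
Proof.
move=> hw /subnKC <-; have size_w := size_mem_nodes_at hw.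
elim: (k - i) => [|d IH].
  rewrite addn0 big_geq // (@eq_in_count _ _ (pred1 w)) => [|l hl /=].
    by rewrite count_uniq_mem ?nodes_at_uniq ?hw.
  by rewrite prefixE size_w -(size_mem_nodes_at hl) take_size eq_sym.
have count_children s : s \in nodes_at r (i + d) ->
    count (prefix w) [seq rcons s x | x <- iota 0 (r (i + d).+1)] =
    (prefix w s * r (i + d).+1)%N.
  move=> hs; rewrite count_map (@eq_count _ _ (fun=> prefix w s)); last first.
    move=> x /=; rewrite !prefixE -cats1 takel_cat // size_w.
    by rewrite (size_mem_nodes_at hs) leq_addr.
  case: (prefix w s); last exact: count_pred0.
  by rewrite mul1n -{2}(size_iota 0 (r (i + d).+1)); exact: count_predT.
have sumn_mul (l : seq (seq nat)) (c : nat) :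
    sumn [seq (prefix w s * c)%N | s <- l] = (count (prefix w) l * c)%N.
  by elim: l => //= s l ->; rewrite mulnDl.
rewrite addnS /= count_flatten -map_comp.
rewrite (_ : map _ _ = [seq prefix w s * r (i + d).+1 | s <- nodes_at r (i + d)]).
  by rewrite sumn_mul IH [in RHS]big_nat_recr //= ltnS leq_addr.
by apply/eq_in_map => s; exact: count_children.
Qed.

Lemma mem_situations_nodes_at {n w} : w \in situations n r ->
  (size w < n)%N /\ w \in nodes_at r (size w).
Proof.
by move=> /flatten_mapP [k]; rewrite mem_iota => hk hw; rewrite (size_mem_nodes_at hw).
Qed.

End Nodes.

Local Open Scope ring_scope.

Section Hyperparameters.
Variables (R : realType) (n : nat) (r : nat -> nat) (alpha : R).
Hypothesis hr : forall t, (1 <= t <= n)%N -> (0 < r t)%N.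

Lemma natr_prod_neq0 {a b} : (0 < a)%N -> (b <= n.+1)%N ->
  ((\prod_(a <= t < b) r t)%:R : R) != 0.
Proof.
move=> ha hb; rewrite pnatr_eq0 -lt0n big_seq_cond prodn_cond_gt0 // => t.
rewrite mem_index_iota andbT => /andP [hat htb].
by apply: hr; rewrite (leq_trans ha hat) -ltnS (leq_trans htb hb).
Qed.

Lemma natr_r_neq0 {t} : (t < n)%N -> ((r t.+1)%:R : R) != 0.
Proof. by move=> ht; rewrite pnatr_eq0 -lt0n hr. Qed.

Lemma div_prod_recr (x : R) m :
  x / (\prod_(1 <= t < m.+2) r t)%:R = x / (\prod_(1 <= t < m.+1) r t)%:R / (r m.+1)%:R.
Proof. by rewrite big_nat_recr //= natrM invfM mulrA. Qed.

Variable stage : seq nat -> nat.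

Lemma cs_in_nodes_at {k w} : (k <= n)%N -> w \in nodes_at r k ->
  cs_in r stage alpha k w = alpha / (\prod_(1 <= t < k.+1) r t)%:R.
Proof.
elim: k w => [|k IH] w hk hw /=; first by rewrite big_geq // divr1.
set u := stage (take k w); set h := count _ _.
have incoming : \sum_(v <- nodes_at r k | stage v == u) cs_in r stage alpha k v
    = alpha / (\prod_(1 <= t < k.+1) r t)%:R * h%:R.
  rewrite big_seq_cond (eq_bigr (fun=> alpha / (\prod_(1 <= t < k.+1) r t)%:R)).
    rewrite big_const_seq iter_addr_0 mulr_natr; congr (_ *+ _).
    by apply: eq_in_count => v /= ->.
  by move=> v /andP [hv _]; rewrite IH // ltnW.
have h_neq0 : (h%:R : R) != 0.
  rewrite pnatr_eq0 -lt0n /h -has_count; apply/hasP.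
  by exists (take k w); [exact: nodes_at_take | rewrite /u].
by rewrite incoming [RHS]div_prod_recr mulrAC mulfK.
Qed.

Hypothesis hlevel : forall v w, v \in situations n r -> w \in situations n r ->
  stage v = stage w -> size v = size w.

Lemma mem_stage_sits {v w} : v \in situations n r ->
  w \in stage_sits n r stage (stage v) ->
  [/\ w \in situations n r, size w = size v & w \in nodes_at r (size v)].
Proof.
move=> hv; rewrite mem_filter => /andP [/eqP hvw hw].
have size_wv := hlevel _ _ hw hv hvw.
by split=> //; rewrite -size_wv; have [] := mem_situations_nodes_at hw.
Qed.

Lemma stage_level_situation {v} : v \in situations n r ->
  stage_level n r stage (stage v) = size v.
Proof.
move=> hv; have hvu : v \in stage_sits n r stage (stage v) by rewrite mem_filter eqxx.
have sits_gt0 : (0 < size (stage_sits n r stage (stage v)))%N.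
  by case: (stage_sits _ _ _ _) hvu.
by rewrite /stage_level; have [_ -> _] := mem_stage_sits hv (mem_nth [::] sits_gt0).
Qed.

Lemma cs_total_situation v : v \in situations n r ->
  cs_total n r stage alpha (stage v) =
  alpha * (hcount n r stage (stage v))%:R / (\prod_(1 <= t < (size v).+1) r t)%:R.
Proof.
move=> hv; have [size_v _] := mem_situations_nodes_at hv.
rewrite /cs_total /hcount (eq_big_seq (fun=> alpha / (\prod_(1 <= t < (size v).+1) r t)%:R)).
  by rewrite big_const_seq count_predT iter_addr_0 [RHS]mulrAC mulr_natr.
by move=> w /(mem_stage_sits hv) [_ -> hw]; exact: cs_in_nodes_at (ltnW size_v) hw.
Qed.

Lemma cs_hyp_situation v k : v \in situations n r ->
  cs_hyp n r stage alpha (stage v) k =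
  alpha * (hcount n r stage (stage v))%:R / (\prod_(1 <= t < (size v).+2) r t)%:R.
Proof.
move=> hv; rewrite /cs_hyp /nedges stage_level_situation //.
by rewrite cs_total_situation // [RHS]div_prod_recr.
Qed.

Variable lab : seq nat -> nat -> nat.
Hypothesis hlab_range : forall v, v \in situations n r ->
  forall k, (k < r (size v).+1)%N -> (lab v k < r (size v).+1)%N.

Lemma size_paths_through_kth_edge w k : w \in situations n r ->
  (k < r (size w).+1)%N ->
  size (paths_through n r (kth_edge lab w k)) = (\prod_((size w).+2 <= t < n.+1) r t)%N.
Proof.
move=> hw hk; have [size_w w_node] := mem_situations_nodes_at hw.
rewrite size_filter /paths (@count_prefix_nodes_at r (size w).+1) //.
exact: nodes_at_rcons w_node (hlab_range _ hw _ hk).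
Qed.

Lemma bdepu_hyp_situation v k : v \in situations n r -> (k < r (size v).+1)%N ->
  bdepu_hyp n r stage lab alpha (stage v) k =
  alpha * (hcount n r stage (stage v))%:R / (\prod_(1 <= t < (size v).+2) r t)%:R.
Proof.
move=> hv hk; have [size_v _] := mem_situations_nodes_at hv.
rewrite /bdepu_hyp (eq_big_seq (fun=> ((\prod_((size v).+2 <= t < n.+1) r t)%:R : R))).
  rewrite big_const_seq count_predT iter_addr_0 /paths size_nodes_at.
  rewrite (@big_cat_nat _ _ _ (size v).+2) //= natrM -mulr_natr /hcount.
  have P_neq0 := @natr_prod_neq0 1 (size v).+2 isT size_v.
  have Q_neq0 := @natr_prod_neq0 (size v).+2 n.+1 isT (leqnn _).
  by field; rewrite P_neq0 Q_neq0.
move=> w /(mem_stage_sits hv) [hw size_wv _].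
have hkw : (k < r (size w).+1)%N by rewrite size_wv.
by rewrite size_paths_through_kth_edge // size_wv.
Qed.

Lemma bdepu_total_situation v : v \in situations n r ->
  bdepu_total n r stage lab alpha (stage v) =
  alpha * (hcount n r stage (stage v))%:R / (\prod_(1 <= t < (size v).+1) r t)%:R.
Proof.
move=> hv; have [size_v _] := mem_situations_nodes_at hv.
rewrite /bdepu_total (eq_bigr (fun=> alpha * (hcount n r stage (stage v))%:R /
    (\prod_(1 <= t < (size v).+2) r t)%:R)) => [|k _]; last first.
  by apply: bdepu_hyp_situation => //; rewrite -(stage_level_situation hv) ltn_ord.
rewrite sumr_const card_ord /nedges stage_level_situation // -[LHS]mulr_natr.
by rewrite div_prod_recr divfK ?natr_r_neq0.
Qed.

End Hyperparameters.

Lemma eq_BDmetric (R : realType) n r stage lab D (a1 a2 : nat -> nat -> R)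
    (b1 b2 : nat -> R) :
  (forall u, u \in stages n r stage ->
     b1 u = b2 u /\ forall k, (k < nedges n r stage u)%N -> a1 u k = a2 u k) ->
  BDmetric n r stage lab D a1 b1 = BDmetric n r stage lab D a2 b2.
Proof.
move=> eq_ab; apply: eq_big_seq => u /eq_ab [-> eq_a]; congr (_ * _).
by apply: eq_bigr => k _; rewrite eq_a.
Qed.

Theorem mainTheorem5 (R : realType) (n : nat) (r : nat -> nat)
  (stage : seq nat -> nat) (lab : seq nat -> nat -> nat) (alpha : R)
  (* finite nonempty state spaces, |X_t| = r t *)
  (hr : forall t, (1 <= t <= n)%N -> (0 < r t)%N)
  (* the edges of each situation v at level i-1 are labelled bijectively by 0..r_i - 1 *)
  (hlab : forall v, v \in situations n r ->
     (forall k, (k < r (size v).+1)%N -> (lab v k < r (size v).+1)%N) /\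
     (forall k1 k2, (k1 < r (size v).+1)%N -> (k2 < r (size v).+1)%N ->
        lab v k1 = lab v k2 -> k1 = k2))
  (* every stage consists of situations at a single level *)
  (hlevel : forall v w, v \in situations n r -> w \in situations n r ->
     stage v = stage w -> size v = size w)
  (halpha : 0 < alpha) :
  (forall v, v \in situations n r ->
     let u := stage v in
     let i := (size v).+1 in
     let h := (hcount n r stage u)%:R : R in
     (forall k, (k < r i)%N ->
        cs_hyp n r stage alpha u k = bdepu_hyp n r stage lab alpha u k /\
        cs_hyp n r stage alpha u k = alpha * h / (\prod_(1 <= t < i.+1) r t)%:R) /\
     cs_total n r stage alpha u = bdepu_total n r stage lab alpha u /\
     cs_total n r stage alpha u = alpha * h / (\prod_(1 <= t < i) r t)%:R) /\
  (forall D : seq (seq nat), all (fun l => l \in paths n r) D ->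
     CSBDeu n r stage lab D alpha = BDepu n r stage lab D alpha).
Proof.
have hlab_range v (hv : v \in situations n r) := (hlab v hv).1.
split=> [v hv /= | D _].
  rewrite cs_total_situation // bdepu_total_situation //; split=> // k hk.
  by rewrite cs_hyp_situation // bdepu_hyp_situation.
apply: eq_BDmetric => u; rewrite mem_undup => /mapP [v hv ->].
rewrite cs_total_situation // bdepu_total_situation //; split=> // k.
rewrite /nedges stage_level_situation // => hk.
by rewrite cs_hyp_situation // bdepu_hyp_situation.
Qed.
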